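(* Let $\mathcal B_{\mathcal E}$ be the set of partitions $\beta_1+\cdots+\beta_n$ ($0<\beta_1\le\cdots\le\beta_n$) with $\beta_1\in\{2,3\}$ and, for each $2\le i\le n$: if $\beta_i$ is odd then $3\le\beta_i-\beta_{i-1}\le4$, and if $\beta_i$ is even then $0\le\beta_i-\beta_{i-1}\le1$. Let $b_{\mathcal E}(n)=\sum q^{|\beta|}$ over $\beta\in\mathcal B_{\mathcal E}$ with exactly $n$ parts ($b_{\mathcal E}(0)=1$). Then $$\sum_{n\ge0}\frac{b_{\mathcal E}(n)}{(q^2;q^2)_n}=1+\frac{q^2+q^3}{1-q^2}+\sum_{n\ge2}\frac{(-q^3;q^4)_{n-1}\,q^{2n}(1+q^{2n-1})}{(q^2;q^2)_n}.$$
   Context: $(a;q)_n=\prod_{j=0}^{n-1}(1-aq^j)$; $|\beta|$ is the sum of parts. *)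

From Stdlib Require Import Reals List Arith Lra.
From Coquelicot Require Import Coquelicot.
Import ListNotations.
Open Scope R_scope.

Fixpoint qpoch (a q : R) (n : nat) : R :=
  match n with
  | O => 1
  | S m => qpoch a q m * (1 - a * q ^ m)
  end.

Definition step_ok (prev x : nat) : bool :=
  if Nat.odd x then (Nat.leb (prev + 3) x && Nat.leb x (prev + 4))%bool
  else (Nat.leb prev x && Nat.leb x (prev + 1))%bool.

Fixpoint chain_ok (prev : nat) (s : list nat) : bool :=
  match s with
  | [] => true
  | x :: r => (step_ok prev x && chain_ok x r)%bool
  end.

(* A partition beta_1 <= ... <= beta_n is encoded as the list
   [beta_1; ...; beta_n] (weakly increasing order).  The empty list is the
   empty partition, giving b_E(0) = 1. *)
Definition inBE (s : list nat) : bool :=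
  match s with
  | [] => true
  | b1 :: r => ((Nat.eqb b1 2 || Nat.eqb b1 3) && chain_ok b1 r)%bool
  end.

Fixpoint lists_bounded (n B : nat) : list (list nat) :=
  match n with
  | O => [[]]
  | S m => flat_map (fun x => map (cons x) (lists_bounded m B)) (seq 0 (S B))
  end.

Definition list_sum (s : list nat) : nat := fold_right Nat.add 0%nat s.

(* Every such beta has all parts <= 3 + 4(n-1) <= 4n, so enumerating lists
   with entries bounded by 4n covers exactly the (finite) set. *)
Definition bE (n : nat) (q : R) : R :=
  fold_right Rplus 0
    (map (fun s => q ^ list_sum s) (filter inBE (lists_bounded n (4 * n)))).

Definition lhs_term (q : R) (n : nat) : R :=
  bE n q / qpoch (q ^ 2) (q ^ 2) n.

Definition rhs_term (q : R) (k : nat) : R :=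
  let n := (k + 2)%nat in
  qpoch (- q ^ 3) (q ^ 4) (n - 1) * q ^ (2 * n) * (1 + q ^ (2 * n - 1))
    / qpoch (q ^ 2) (q ^ 2) n.

From Stdlib Require Import Reals List Arith Lra Lia.
From Coquelicot Require Import Coquelicot.
Import ListNotations.
Open Scope R_scope.

(* The parity rule for B_E is deterministic up to one binary
   choice: after a part p, the next part is either e or e + 3, where
   e = p + (p mod 2) is the least even number >= p.  Hence the generating
   function of the admissible continuations of length m after p is
     q^(m e) * (-q^3; q^4)_m,
   by induction on m (the "+3" choice contributes the factor q^(3 + 4(m-1))).
   With the first part 2 or 3 this gives the closed form
     b_E(n+1) = (-q^3; q^4)_n * (q^(2n+2) + q^(4n+3)),
   so the n-th term of the right-hand series equals the (n+2)-th term of the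
   left-hand series, while the terms n = 0, 1 on the left are 1 and
   (q^2 + q^3)/(1 - q^2).  Convergence for |q| < 1 follows from the ratio
   test applied to the majorant 2 (-|q|^3; |q|^4)_n ((1+q^2)/2)^n / (q^2;q^2)_n. *)

Definition sumR (l : list R) : R := fold_right Rplus 0 l.

Lemma sumR_app (l1 l2 : list R) : sumR (l1 ++ l2) = sumR l1 + sumR l2.
Proof. induction l1 as [|x l IH]; simpl; [ring | rewrite IH; ring]. Qed.

Lemma sumR_ext {A} (f g : A -> R) (l : list A) :
  (forall x, f x = g x) -> sumR (map f l) = sumR (map g l).
Proof. intros H; induction l as [|x l IH]; simpl; [|rewrite H, IH]; reflexivity. Qed.

Lemma sumR_scal {A} (c : R) (f : A -> R) (l : list A) :
  sumR (map (fun x => c * f x) l) = c * sumR (map f l).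
Proof. induction l as [|x l IH]; simpl; [ring | rewrite IH; ring]. Qed.

Lemma sumR_plus {A} (f g : A -> R) (l : list A) :
  sumR (map (fun x => f x + g x) l) = sumR (map f l) + sumR (map g l).
Proof. induction l as [|x l IH]; simpl; [ring | rewrite IH; ring]. Qed.

Lemma sumR_filter {A} (f : A -> R) (p : A -> bool) (l : list A) :
  sumR (map f (filter p l)) = sumR (map (fun x => if p x then f x else 0) l).
Proof.
  induction l as [|x l IH]; simpl; [reflexivity|].
  destruct (p x); simpl; rewrite IH; ring.
Qed.

Lemma sumR_flat_map {A B} (h : B -> R) (g : A -> list B) (l : list A) :
  sumR (map h (flat_map g l)) = sumR (map (fun x => sumR (map h (g x))) l).
Proof. induction l as [|x l IH]; simpl; [|rewrite map_app, sumR_app, IH]; reflexivity. Qed.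

Lemma sumR_point (F : nat -> R) (a start len : nat) :
  sumR (map (fun x => if Nat.eqb x a then F x else 0) (seq start len)) =
  if andb (Nat.leb start a) (Nat.ltb a (start + len)) then F a else 0.
Proof.
  induction len as [|len IH].
  - simpl. destruct (Nat.leb_spec start a), (Nat.ltb_spec a (start + 0)); simpl; lra || lia.
  - rewrite seq_S, map_app, sumR_app, IH; simpl.
    destruct (Nat.eqb_spec (start + len) a) as [<-|Hne];
      repeat match goal with
             | |- context [Nat.leb ?x ?y] => destruct (Nat.leb_spec x y)
             | |- context [Nat.ltb ?x ?y] => destruct (Nat.ltb_spec x y)
             end; simpl; lra || lia.
Qed.

Lemma sumR_two_points (F : nat -> R) (a b N : nat) :
  a <> b -> (a < N)%nat -> (b < N)%nat ->
  sumR (map (fun x => if (Nat.eqb x a || Nat.eqb x b)%bool then F x else 0)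
            (seq 0 N)) = F a + F b.
Proof.
  intros Hab Ha Hb.
  rewrite (sumR_ext _ (fun x => (if Nat.eqb x a then F x else 0)
                                + (if Nat.eqb x b then F x else 0))).
  - rewrite sumR_plus, !sumR_point.
    destruct (Nat.leb_spec 0 a), (Nat.ltb_spec a (0 + N)),
             (Nat.leb_spec 0 b), (Nat.ltb_spec b (0 + N)); simpl; lra || lia.
  - intros x. destruct (Nat.eqb_spec x a), (Nat.eqb_spec x b); simpl; lra || lia.
Qed.

Definition even_ceil (n : nat) : nat := n + Nat.b2n (Nat.odd n).

Lemma even_ceil_even (n : nat) : Nat.odd (even_ceil n) = false.
Proof.
  unfold even_ceil. rewrite Nat.odd_add.
  destruct (Nat.odd n); reflexivity.
Qed.

Lemma step_ok_spec (p x : nat) :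
  step_ok p x = (Nat.eqb x (even_ceil p) || Nat.eqb x (even_ceil p + 3))%bool.
Proof.
  apply Bool.eq_true_iff_eq.
  rewrite Bool.orb_true_iff, !Nat.eqb_eq.
  unfold step_ok, even_ceil.
  destruct (Nat.Even_or_Odd p) as [[k ->]|[k ->]];
  destruct (Nat.Even_or_Odd x) as [[j ->]|[j ->]];
    rewrite ?Nat.odd_even, ?Nat.odd_odd; simpl;
    rewrite ?Bool.andb_true_iff, ?Nat.leb_le; lia.
Qed.

Section Enumeration.
Variable q : R.

Definition odd_poch (m : nat) : R := qpoch (- q ^ 3) (q ^ 4) m.

Lemma odd_poch_S (m : nat) :
  odd_poch (S m) = odd_poch m * (1 + q ^ (3 + 4 * m)).
Proof. unfold odd_poch; cbn [qpoch]. rewrite pow_add, pow_mult. ring. Qed.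

Definition chain_gf (m B p : nat) : R :=
  sumR (map (fun s => if chain_ok p s then q ^ list_sum s else 0)
            (lists_bounded m B)).

Lemma sumR_cons_entry (ok : list nat -> bool) (x : nat) (L : list (list nat)) :
  sumR (map (fun s => if ok s then q ^ list_sum s else 0) (map (cons x) L)) =
  q ^ x * sumR (map (fun s => if ok (x :: s) then q ^ list_sum s else 0) L).
Proof.
  rewrite map_map, <- sumR_scal. apply sumR_ext. intros s.
  simpl list_sum. destruct (ok (x :: s)); [rewrite pow_add|]; ring.
Qed.

Lemma chain_gf_S (m B p : nat) :
  chain_gf (S m) B p =
  sumR (map (fun x => if step_ok p x then q ^ x * chain_gf m B x else 0)
            (seq 0 (S B))).
Proof.
  unfold chain_gf; cbn [lists_bounded]. rewrite sumR_flat_map.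
  apply sumR_ext. intros x. rewrite sumR_cons_entry. simpl chain_ok.
  destruct (step_ok p x); simpl.
  - reflexivity.
  - rewrite (sumR_ext _ (fun s => 0 * q ^ list_sum s)), sumR_scal by (intros; ring).
    ring.
Qed.

Lemma chain_gf_closed (m : nat) : forall B p, (p + 4 * m <= B)%nat ->
  chain_gf m B p = q ^ (m * even_ceil p) * odd_poch m.
Proof.
  induction m as [|m IH]; intros B p HB.
  - unfold chain_gf, odd_poch; simpl. ring.
  - assert (He : (p <= even_ceil p <= p + 1)%nat)
      by (unfold even_ceil; destruct (Nat.odd p); simpl; lia).
    rewrite chain_gf_S.
    rewrite (sumR_ext _ (fun x => if (Nat.eqb x (even_ceil p)
                                       || Nat.eqb x (even_ceil p + 3))%bool
                                  then q ^ x * chain_gf m B x else 0))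
      by (intros x; now rewrite step_ok_spec).
    rewrite sumR_two_points, !IH by lia.
    assert (Hup : even_ceil (even_ceil p + 3) = (even_ceil p + 4)%nat).
    { unfold even_ceil at 1. rewrite Nat.odd_add, even_ceil_even. simpl. lia. }
    assert (Hfix : even_ceil (even_ceil p) = even_ceil p).
    { unfold even_ceil at 1. rewrite even_ceil_even. simpl. lia. }
    rewrite Hup, Hfix, odd_poch_S.
    replace (m * (even_ceil p + 4))%nat with (m * even_ceil p + 4 * m)%nat by lia.
    replace (S m * even_ceil p)%nat with (even_ceil p + m * even_ceil p)%nat by lia.
    rewrite !pow_add. ring.
Qed.

Lemma bE_0 : bE 0 q = 1.
Proof. unfold bE. simpl. ring. Qed.

Lemma bE_S (m : nat) :
  bE (S m) q = odd_poch m * (q ^ (2 * S m) + q ^ (4 * m + 3)).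
Proof.
  unfold bE. fold sumR. rewrite sumR_filter.
  cbn [lists_bounded]. rewrite sumR_flat_map.
  rewrite (sumR_ext _ (fun x => if (Nat.eqb x 2 || Nat.eqb x 3)%bool
                                then q ^ x * chain_gf m (4 * S m) x else 0)).
  - rewrite sumR_two_points, !chain_gf_closed by lia.
    change (even_ceil 2) with 2%nat; change (even_ceil 3) with 4%nat.
    rewrite <- !Rmult_assoc, <- !pow_add.
    replace (2 + m * 2)%nat with (2 * S m)%nat by lia.
    replace (3 + m * 4)%nat with (4 * m + 3)%nat by lia.
    ring.
  - intros x. rewrite sumR_cons_entry. unfold chain_gf. simpl inBE.
    destruct (Nat.eqb x 2 || Nat.eqb x 3)%bool; simpl.
    + reflexivity.
    + rewrite (sumR_ext _ (fun s => 0 * q ^ list_sum s)), sumR_scal by (intros; ring).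
      ring.
Qed.

Lemma lhs_term_0 : lhs_term q 0 = 1.
Proof. unfold lhs_term. rewrite bE_0. simpl. field. Qed.

Lemma lhs_term_S (m : nat) :
  lhs_term q (S m) =
  odd_poch m * (q ^ (2 * S m) + q ^ (4 * m + 3)) / qpoch (q ^ 2) (q ^ 2) (S m).
Proof. unfold lhs_term. now rewrite bE_S. Qed.

Lemma rhs_term_shift (k : nat) : rhs_term q k = lhs_term q (2 + k).
Proof.
  unfold rhs_term. simpl (2 + k)%nat. rewrite lhs_term_S.
  replace (k + 2)%nat with (S (S k)) by lia.
  replace (S (S k) - 1)%nat with (S k) by lia.
  replace (2 * S (S k) - 1)%nat with (S (2 * S k)) by lia.
  replace (4 * S k + 3)%nat with (2 * S (S k) + S (2 * S k))%nat by lia.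
  fold (odd_poch (S k)). rewrite (pow_add q (2 * S (S k))).
  unfold Rdiv. ring.
Qed.

End Enumeration.

Lemma pow_decr (x : R) (m n : nat) : 0 <= x <= 1 -> (m <= n)%nat -> x ^ n <= x ^ m.
Proof.
  intros Hx Hmn. replace n with (m + (n - m))%nat by lia. rewrite pow_add.
  assert (0 <= x ^ m) by (apply pow_le; lra).
  assert (0 <= x ^ (n - m) <= 1).
  { split; [apply pow_le; lra|]. rewrite <- (pow1 (n - m)). apply pow_incr. lra. }
  nra.
Qed.

Lemma qpoch_abs_le (a x : R) (n : nat) :
  Rabs (qpoch a x n) <= qpoch (- Rabs a) (Rabs x) n.
Proof.
  induction n as [|n IH]; simpl; [rewrite Rabs_R1; lra|].
  rewrite Rabs_mult. apply Rmult_le_compat; try apply Rabs_pos; [exact IH|].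
  eapply Rle_trans; [apply Rabs_triang|].
  rewrite Rabs_R1, Rabs_Ropp, Rabs_mult, RPow_abs. lra.
Qed.

Lemma qpoch_neg_factor (c x : R) (n : nat) : 0 <= c -> 0 <= x -> 1 <= 1 - - c * x ^ n.
Proof. intros Hc Hx. assert (0 <= c * x ^ n) by (apply Rmult_le_pos; [|apply pow_le]; lra). lra. Qed.

Lemma qpoch_neg_ge1 (c x : R) (n : nat) : 0 <= c -> 0 <= x -> 1 <= qpoch (- c) x n.
Proof.
  intros Hc Hx. induction n as [|n IH]; simpl; [lra|].
  pose proof (qpoch_neg_factor c x n Hc Hx). nra.
Qed.

Lemma qpoch_neg_mono (c x : R) (n : nat) :
  0 <= c -> 0 <= x -> qpoch (- c) x n <= qpoch (- c) x (S n).
Proof.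
  intros Hc Hx. simpl.
  pose proof (qpoch_neg_factor c x n Hc Hx). pose proof (qpoch_neg_ge1 c x n Hc Hx). nra.
Qed.

Lemma qpoch_factor_pos (x : R) (n : nat) : 0 <= x < 1 -> 0 < 1 - x * x ^ n.
Proof.
  intros Hx. assert (0 <= x ^ n <= 1).
  { split; [apply pow_le; lra|]. rewrite <- (pow1 n). apply pow_incr. lra. }
  nra.
Qed.

Lemma qpoch_pos (x : R) (n : nat) : 0 <= x < 1 -> 0 < qpoch x x n.
Proof.
  intros Hx. induction n as [|n IH]; simpl; [lra|].
  pose proof (qpoch_factor_pos x n Hx). nra.
Qed.

Section Convergence.
Variable q : R.
Hypothesis hq : Rabs q < 1.

Let r := Rabs q.
Let s := (1 + q ^ 2) / 2.

Lemma r_range : 0 <= r < 1.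
Proof. split; [apply Rabs_pos | exact hq]. Qed.

Lemma q2_range : 0 <= q ^ 2 < 1.
Proof.
  pose proof r_range. unfold r in *. rewrite <- pow2_abs.
  split; [apply pow_le|]; nra.
Qed.

Lemma s_range : 0 < s < 1.
Proof. pose proof q2_range. unfold s; lra. Qed.

Definition majorant (n : nat) : R :=
  2 * qpoch (- r ^ 3) (r ^ 4) n * s ^ n / qpoch (q ^ 2) (q ^ 2) n.

Lemma majorant_pos (n : nat) : 0 < majorant n.
Proof.
  pose proof r_range. pose proof s_range.
  pose proof (qpoch_pos (q ^ 2) n q2_range).
  pose proof (qpoch_neg_ge1 (r ^ 3) (r ^ 4) n (pow_le _ _ (proj1 r_range))
                (pow_le _ _ (proj1 r_range))).
  assert (0 < s ^ n) by (apply pow_lt; lra).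
  unfold majorant. apply Rdiv_lt_0_compat; [nra | assumption].
Qed.

Lemma numerator_bound (m : nat) :
  Rabs (q ^ (2 * S m) + q ^ (4 * m + 3)) <= 2 * s ^ S m.
Proof.
  pose proof r_range. pose proof q2_range.
  eapply Rle_trans; [apply Rabs_triang|]. rewrite <- !RPow_abs. fold r.
  assert (r ^ (4 * m + 3) <= r ^ (2 * S m)) by (apply pow_decr; lra || lia).
  assert (r ^ (2 * S m) <= s ^ S m).
  { rewrite pow_mult. unfold r. rewrite pow2_abs. apply pow_incr. unfold s; lra. }
  lra.
Qed.

Lemma lhs_term_bound (n : nat) : Rabs (lhs_term q n) <= majorant n.
Proof.
  pose proof r_range as Hr.
  pose proof (qpoch_pos (q ^ 2) n q2_range) as HQ.
  destruct n as [|m].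
  - rewrite lhs_term_0, Rabs_R1. unfold majorant; simpl. lra.
  - rewrite lhs_term_S, Rabs_div, (Rabs_right (qpoch _ _ (S m))) by lra.
    unfold majorant. apply Rmult_le_compat_r; [left; apply Rinv_0_lt_compat; lra|].
    rewrite Rabs_mult.
    assert (Hpoch : Rabs (odd_poch q m) <= qpoch (- r ^ 3) (r ^ 4) (S m)).
    { eapply Rle_trans; [apply qpoch_abs_le|].
      rewrite Rabs_Ropp, <- !RPow_abs. fold r.
      apply qpoch_neg_mono; apply pow_le; lra. }
    pose proof (numerator_bound m).
    replace (2 * qpoch (- r ^ 3) (r ^ 4) (S m) * s ^ S m)
      with (qpoch (- r ^ 3) (r ^ 4) (S m) * (2 * s ^ S m)) by ring.
    apply Rmult_le_compat; try apply Rabs_pos; assumption.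
Qed.

Lemma majorant_ratio (n : nat) :
  majorant (S n) / majorant n = s * (1 + r ^ 3 * (r ^ 4) ^ n) / (1 - q ^ 2 * (q ^ 2) ^ n).
Proof.
  pose proof r_range. pose proof s_range.
  pose proof (qpoch_pos (q ^ 2) n q2_range).
  pose proof (qpoch_factor_pos (q ^ 2) n q2_range).
  pose proof (qpoch_neg_ge1 (r ^ 3) (r ^ 4) n (pow_le _ _ (proj1 r_range))
                (pow_le _ _ (proj1 r_range))).
  assert (0 < s ^ n) by (apply pow_lt; lra).
  unfold majorant; cbn [qpoch]. change (s ^ S n) with (s * s ^ n).
  field. repeat split; lra.
Qed.

Lemma majorant_ratio_lim :
  is_lim_seq (fun n => Rabs (majorant (S n) / majorant n)) s.
Proof.
  pose proof r_range. pose proof q2_range.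
  assert (Hr4 : Rabs (r ^ 4) < 1).
  { rewrite Rabs_right by (apply Rle_ge, pow_le; lra).
    assert (r ^ 4 <= r ^ 1) by (apply pow_decr; lra || lia). simpl in *. lra. }
  assert (Hq2 : Rabs (q ^ 2) < 1) by (rewrite Rabs_right; lra).
  assert (L : is_lim_seq
                (fun n => s * (1 + r ^ 3 * (r ^ 4) ^ n) / (1 - q ^ 2 * (q ^ 2) ^ n))
                (s * (1 + r ^ 3 * 0) / (1 - q ^ 2 * 0))).
  { apply is_lim_seq_div'; [| |lra].
    - apply is_lim_seq_mult'; [apply is_lim_seq_const|].
      apply is_lim_seq_plus'; [apply is_lim_seq_const|].
      apply is_lim_seq_mult'; [apply is_lim_seq_const | now apply is_lim_seq_geom].
    - apply is_lim_seq_minus'; [apply is_lim_seq_const|].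
      apply is_lim_seq_mult'; [apply is_lim_seq_const | now apply is_lim_seq_geom]. }
  replace (s * (1 + r ^ 3 * 0) / (1 - q ^ 2 * 0)) with s in L by field.
  eapply is_lim_seq_ext; [|exact L]. intros n.
  rewrite Rabs_right, majorant_ratio; [reflexivity|].
  pose proof (majorant_pos n). pose proof (majorant_pos (S n)).
  apply Rle_ge. left. apply Rdiv_lt_0_compat; assumption.
Qed.

Lemma ex_series_majorant : ex_series majorant.
Proof.
  pose proof s_range.
  apply (ex_series_ext (fun n => Rabs (majorant n))).
  - intros n. apply Rabs_right. left. apply majorant_pos.
  - apply (ex_series_DAlembert majorant s); [lra | | exact majorant_ratio_lim].
    intros n. pose proof (majorant_pos n). lra.
Qed.

Lemma ex_series_lhs : ex_series (lhs_term q).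
Proof.
  apply (@ex_series_le R_AbsRing R_CompleteNormedModule _ majorant).
  - exact lhs_term_bound.
  - exact ex_series_majorant.
Qed.

End Convergence.

Theorem theorem16 (q : R) (hq : Rabs q < 1) :
  ex_series (lhs_term q) /\ ex_series (rhs_term q) /\
  Series (lhs_term q) =
    1 + (q ^ 2 + q ^ 3) / (1 - q ^ 2) + Series (rhs_term q).
Proof.
  pose proof (ex_series_lhs q hq) as Hlhs.
  assert (Hshift : forall k, lhs_term q (2 + k) = rhs_term q k)
    by (intros k; symmetry; apply rhs_term_shift).
  assert (Hrhs : ex_series (rhs_term q)).
  { apply (ex_series_ext _ _ Hshift). now apply ex_series_incr_n. }
  split; [exact Hlhs | split; [exact Hrhs|]].
  rewrite (Series_incr_n (lhs_term q) 2), (Series_ext _ _ Hshift) by (auto || lia).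
  simpl sum_f_R0. rewrite lhs_term_0, lhs_term_S.
  pose proof (q2_range q hq).
  unfold odd_poch; simpl qpoch; simpl pow.
  f_equal. field. nra.
Qed.
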